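(* If $C$ is a binary linear constant weight code of dimension at least $2$, then $|\mathrm{PAut}(C)|$ is a multiple of $6$.
   Context: A binary linear constant weight code of weight $w$ is an $\mathbb{F}_2$-subspace of $\mathbb{F}_2^n$ all of whose non-zero vectors have exactly $w$ coordinates equal to $1$. $S_n$ acts on $\mathbb{F}_2^n$ by permuting coordinates, $\sigma(v_1,\dots,v_n)=(v_{\sigma^{-1}(1)},\dots,v_{\sigma^{-1}(n)})$, and $\mathrm{PAut}(C)=\{\sigma\in S_n:\sigma(C)=C\}$. *)

From HB Require Import structures.
From mathcomp Require Import all_boot all_order all_algebra all_fingroup all_field.
Set Implicit Arguments. Unset Strict Implicit. Unset Printing Implicit Defensive.
Import GRing.Theory.
Local Open Scope ring_scope.

Definition word (n : nat) := 'rV['F_2]_n.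

Definition wt (n : nat) (v : word n) : nat := #|[set i : 'I_n | v 0 i != 0]|.

(* sigma(v)_i = v_{sigma^{-1}(i)}. *)
Definition perm_act (n : nat) (s : {perm 'I_n}) (v : word n) : word n :=
  col_perm s^-1 v.

Definition constant_weight (n : nat) (C : {vspace word n}) (w : nat) : Prop :=
  forall v, v \in C -> v != 0 -> wt v = w.

Definition PAut (n : nat) (C : {vspace word n}) : {set {perm 'I_n}} :=
  [set s : {perm 'I_n} | ((linfun (perm_act s)) @: C)%VS == C].

From HB Require Import structures.
From mathcomp Require Import all_boot all_order all_algebra all_fingroup all_solvable all_field.
Set Implicit Arguments. Unset Strict Implicit. Unset Printing Implicit Defensive.
Import GRing.Theory.
Local Open Scope ring_scope.

(* Fix a generator matrix G : k x n of C (rows = a basis of C), so that the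
   codewords are exactly the x *m G.  Its columns are vectors of F_2^k.
   1. (Bonisoli-type counting.)  Counting the pairs (x, i) with x.u = 1 and
      (x G)_i != 0 shows that, for every nonzero u, the number of columns
      equal to u is 2w - #(nonzero columns): the nonzero columns are
      equidistributed among the nonzero vectors of F_2^k.
   2. Hence every invertible A : k x k induces a permutation of the
      coordinates sending the r-th column equal to u to the r-th column equal
      to A u.  This is functorial in A, and the induced permutation maps the
      codeword x G to (x A^-1) G, so it lies in PAut(C).
   3. If A^p = 1 for a prime p and A moves some nonzero vector, the induced
      permutation has order exactly p, so p divides |PAut(C)|.
   4. GL_k(F_2), k >= 2, contains such matrices for p = 2 and p = 3 (extend
      the 2 x 2 coordinate swap and a 2 x 2 matrix of order 3 by the
      identity).  As 2 and 3 are coprime, 6 divides |PAut(C)|. *)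

Lemma F2_cases (a : 'F_2) : a = 0 \/ a = 1.
Proof. by case: a => [[|[|//]]] H; [left | right]; apply/val_inj. Qed.

Lemma F2_add11 : (1 + 1 : 'F_2) = 0.
Proof. by apply/val_inj. Qed.

Lemma F2_neq0 (a : 'F_2) : (a != 0) = (a == 1).
Proof. by case: (F2_cases a) => ->; rewrite ?eqxx ?oner_eq0 // eq_sym oner_eq0. Qed.

Definition dot k (x : 'rV['F_2]_k) (v : 'cV_k) : 'F_2 := (x *m v) 0 0.

Lemma dotDl k (x y : 'rV['F_2]_k) v : dot (x + y) v = dot x v + dot y v.
Proof. by rewrite /dot mulmxDl mxE. Qed.

Lemma dotNl k (x : 'rV['F_2]_k) v : dot (- x) v = - dot x v.
Proof. by rewrite /dot mulNmx mxE. Qed.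

Lemma dot0r k (x : 'rV['F_2]_k) : dot x 0 = 0.
Proof. by rewrite /dot mulmx0 mxE. Qed.

Lemma dot0l k (v : 'cV['F_2]_k) : dot 0 v = 0.
Proof. by rewrite /dot mul0mx mxE. Qed.

Lemma dot_delta k (j : 'I_k) (v : 'cV['F_2]_k) : dot (delta_mx 0 j) v = v j 0.
Proof. by rewrite /dot -rowE mxE. Qed.

Lemma dot_col k n (x : 'rV['F_2]_k) (G : 'M_(k, n)) i : (x *m G) 0 i = dot x (col i G).
Proof. by rewrite /dot colE mulmxA -colE [RHS]mxE. Qed.

Lemma exists_nonzero_entry k (u : 'cV['F_2]_k) : u != 0 -> exists j, u j 0 = 1.
Proof.
case: (pickP (fun j => u j 0 != 0)) => [j Hj|H] Hu.
  by exists j; apply/eqP; rewrite -F2_neq0.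
case/eqP: Hu; apply/matrixP => a b; rewrite (ord1 b) mxE.
by have := H a; move/negbFE/eqP.
Qed.

Lemma separating_functional k (u c : 'cV['F_2]_k) : c != 0 -> c != u ->
  exists y, dot y u = 0 /\ dot y c = 1.
Proof.
move=> Hc Hcu; have [l Hl] := exists_nonzero_entry Hc.
have [j Hj] : exists j, u j 0 != c j 0.
  case: (pickP (fun j => u j 0 != c j 0)) => [j Hj|H]; first by exists j.
  case/eqP: Hcu; apply/matrixP => a b; rewrite (ord1 b).
  by have := H a; move/negbFE/eqP.
case: (F2_cases (u j 0)) Hj => Huj; case: (F2_cases (c j 0)) => Hcj;
  rewrite Huj Hcj ?eqxx // => _.
  by exists (delta_mx 0 j); rewrite !dot_delta.
case: (F2_cases (u l 0)) => Hul.
  by exists (delta_mx 0 l); rewrite !dot_delta.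
exists (delta_mx 0 j + delta_mx 0 l).
by rewrite !dotDl !dot_delta Huj Hul Hcj Hl F2_add11 add0r.
Qed.

Lemma card_set_sum (T : finType) (P : pred T) : #|[set x | P x]| = (\sum_x (P x : nat))%N.
Proof.
rewrite -sum1_card big_mkcond /=; apply: eq_bigr => x _; rewrite inE; by case: (P x).
Qed.

Definition hyperplane1 k (u : 'cV['F_2]_k) := [set x : 'rV_k | dot x u == 1].

(* For u != 0, the functional x |-> x.c is nonzero on exactly half of
   {x | x.u = 1} when c is neither 0 nor u, on all of it when c = u, and on
   none of it when c = 0. *)
Lemma count_nonzero_on_hyperplane k (u c : 'cV['F_2]_k) : u != 0 ->
  (2 * #|[set x in hyperplane1 u | dot x c != 0%R]|
     = #|hyperplane1 u| * ((c == u) + (c != 0%R)))%N.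
Proof.
move=> Hu; case: (eqVneq c u) => [->|Hcu].
  rewrite Hu /= mulnC; congr (_ * _)%N.
  by apply: eq_card => x; rewrite !inE F2_neq0 andbb.
case: (eqVneq c 0) => [->|Hc].
  rewrite muln0 (_ : [set _ in _ | _] = set0) ?cards0 //.
  by apply/setP => x; rewrite !inE dot0r eqxx andbF.
have [y [Hyu Hyc]] := separating_functional Hc Hcu.
set S1 := [set x in _ | _].
(* translation by y exchanges the two halves *)
have E0 : hyperplane1 u :\: [set x | dot x c != 0] = (fun x => x + y) @: S1.
  apply/setP => z; rewrite !inE; apply/idP/imsetP.
    case/andP => Hz Hzu; exists (z - y); last by rewrite subrK.
    rewrite !inE !dotDl !dotNl Hyu Hyc oppr0 addr0 Hzu /=.
    by move: Hz; rewrite negbK => /eqP ->; rewrite add0r oppr_eq0 oner_eq0.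
  case=> x; rewrite !inE => /andP [Hxu Hxc] ->.
  rewrite !dotDl Hyu Hyc addr0 Hxu andbT negbK.
  by move: Hxc; rewrite F2_neq0 => /eqP ->; rewrite F2_add11.
have E1 : hyperplane1 u :&: [set x | dot x c != 0] = S1.
  by apply/setP => x; rewrite !inE.
rewrite muln1 -(cardsID [set x | dot x c != 0] (hyperplane1 u)) E1 E0.
by rewrite card_imset; [rewrite mul2n addnn | exact: addIr].
Qed.

Lemma unitmx_neq0 k (A : 'M['F_2]_k) (v : 'cV_k) :
  A \in unitmx -> v != 0 -> A *m v != 0.
Proof.
move=> HA; apply: contra => /eqP Av0.
by rewrite -(mulKmx HA v) Av0 mulmx0.
Qed.

Section ColumnClasses.

Variables k n : nat.
Variable G : 'M['F_2]_(k, n).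

Definition col_class (u : 'cV_k) : {set 'I_n} := [set j | col j G == u].

Definition equidistributed : Prop :=
  forall u v, u != 0 -> v != 0 -> #|col_class u| = #|col_class v|.

(* Double count the pairs (x, i) with x.u = 1 and (x G)_i != 0. *)
Lemma col_class_count w :
  (forall x : 'rV_k, x != 0 -> #|[set i | (x *m G) 0 i != 0]| = w) ->
  forall u : 'cV_k, u != 0 ->
  (#|col_class u| + #|[set i | col i G != 0%R]| = 2 * w)%N.
Proof.
move=> Hw u Hu.
have Ppos : (0 < #|hyperplane1 u|)%N.
  have [j Hj] := exists_nonzero_entry Hu.
  by apply/card_gt0P; exists (delta_mx 0 j); rewrite inE dot_delta Hj.
apply/eqP; rewrite -(eqn_pmul2l Ppos); apply/eqP.
have by_rows : (\sum_(x in hyperplane1 u) #|[set i | (x *m G) 0%R i != 0%R]|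
               = #|hyperplane1 u| * w)%N.
  rewrite (eq_bigr (fun _ => w)) ?sum_nat_const // => x; rewrite inE => Hx.
  by apply: Hw; apply: contraTneq Hx => ->; rewrite dot0l eq_sym oner_eq0.
have by_columns : (\sum_(x in hyperplane1 u) #|[set i | (x *m G) 0%R i != 0%R]| =
   \sum_i #|[set x in hyperplane1 u | dot x (col i G) != 0%R]|)%N.
  under eq_bigr do rewrite card_set_sum.
  rewrite exchange_big /=; apply: eq_bigr => i _.
  rewrite card_set_sum [LHS]big_mkcond /=; apply: eq_bigr => x _.
  by rewrite !inE dot_col; case: (dot x u == 1).
rewrite mulnCA -by_rows by_columns big_distrr /=.
under eq_bigr do rewrite count_nonzero_on_hyperplane //.
rewrite -big_distrr /= big_split /= -!card_set_sum.
by congr (_ * (_ + _))%N; apply: eq_card => i; rewrite !inE.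
Qed.

Lemma equidistributed_of_constant_weight w :
  (forall x : 'rV_k, x != 0 -> #|[set i | (x *m G) 0 i != 0]| = w) ->
  equidistributed.
Proof.
move=> Hw u v Hu Hv; apply/eqP.
rewrite -(eqn_add2r #|[set i | col i G != 0]|).
by rewrite !(col_class_count Hw).
Qed.

Hypothesis Gequi : equidistributed.

(* The coordinate map induced by A: the r-th column equal to u goes to the
   r-th column equal to A u (zero columns are fixed). *)
Definition col_map (A : 'M_k) (i : 'I_n) : 'I_n :=
  if col i G == 0 then i
  else nth i (enum (col_class (A *m col i G))) (index i (enum (col_class (col i G)))).

Lemma index_col_class_lt i :
  (index i (enum (col_class (col i G))) < #|col_class (col i G)|)%N.
Proof. by rewrite cardE index_mem mem_enum inE. Qed.

Lemma col_mapP A i : A \in unitmx ->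
  col (col_map A i) G = A *m col i G /\
  (col i G != 0 -> index (col_map A i) (enum (col_class (A *m col i G)))
                   = index i (enum (col_class (col i G)))).
Proof.
move=> HA; rewrite /col_map; case: eqP => [->|/eqP Hv]; first by rewrite mulmx0.
have Hlt : (index i (enum (col_class (col i G)))
            < size (enum (col_class (A *m col i G))))%N.
  by rewrite -cardE (@Gequi _ (col i G)) ?index_col_class_lt ?unitmx_neq0.
split=> [|_]; last by rewrite index_uniq ?enum_uniq.
by have := mem_nth i Hlt; rewrite mem_enum inE => /eqP.
Qed.

Lemma col_mapM A B i : A \in unitmx -> B \in unitmx ->
  col_map B (col_map A i) = col_map (B *m A) i.
Proof.
move=> HA HB; have [Hc Hi] := col_mapP i HA.
case: (eqVneq (col i G) 0) => [Hv|Hv].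
  by rewrite /col_map Hv mulmx0 !eqxx Hv eqxx.
rewrite {1}/col_map Hc (negPf (unitmx_neq0 HA Hv)) Hi // /col_map (negPf Hv) mulmxA.
apply: set_nth_default.
by rewrite -cardE (@Gequi _ (col i G)) ?index_col_class_lt // -mulmxA !unitmx_neq0.
Qed.

Lemma col_map1 i : col_map 1%:M i = i.
Proof. by rewrite /col_map mul1mx; case: eqP => // _; rewrite nth_index // mem_enum inE. Qed.

Lemma col_map_iter A p i : A \in unitmx ->
  iter p (col_map A) i = col_map (iter p (mulmx A) 1%:M) i.
Proof.
move=> HA; elim: p => [|p IHp] /=; first by rewrite col_map1.
have Hunit : iter p (mulmx A) 1%:M \in unitmx.
  by elim: p {IHp} => [|p IH] /=; rewrite ?unitmx1 ?unitmx_mul ?HA.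
by rewrite IHp col_mapM.
Qed.

(* If some column of G is nonzero, every nonzero vector occurs as a column, so
   a matrix moving a nonzero vector moves some coordinate. *)
Lemma col_map_moves A (v : 'cV_k) : A \in unitmx -> (exists i, col i G != 0) ->
  v != 0 -> A *m v != v -> exists i, col_map A i != i.
Proof.
move=> HA [i Hi] Hv HAv.
have : (0 < #|col_class v|)%N.
  by rewrite (@Gequi _ (col i G)) //; apply/card_gt0P; exists i; rewrite inE.
case/card_gt0P => j; rewrite inE => /eqP Hj; exists j.
apply: contra HAv => /eqP Hg.
have [Hc _] := col_mapP j HA.
by rewrite Hg Hj in Hc; rewrite -Hc.
Qed.

End ColumnClasses.

(* Coordinate permutations are linear, so that linfun (perm_act s) computes. *)
HB.instance Definition _ n (s : {perm 'I_n}) :=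
  GRing.Linear.copy (perm_act s) (col_perm s^-1 : word n -> word n).

Lemma perm_actM n (s t : {perm 'I_n}) (v : word n) :
  perm_act (s * t) v = perm_act t (perm_act s v).
Proof. by apply/matrixP => a b; rewrite !mxE invMg permM. Qed.

Lemma perm_act1 n (v : word n) : perm_act 1 v = v.
Proof. by apply/matrixP => a b; rewrite !mxE invg1 perm1. Qed.

Lemma perm_actK n (s : {perm 'I_n}) : cancel (perm_act s) (perm_act s^-1).
Proof. by move=> v; rewrite -perm_actM mulgV perm_act1. Qed.

(* Since a coordinate permutation is injective, sigma(C) = C as soon as
   sigma(C) is contained in C. *)
Lemma PAutP n (C : {vspace word n}) s :
  (forall v, v \in C -> perm_act s v \in C) -> s \in PAut C.
Proof.
move=> H; rewrite inE eqEdim; apply/andP; split.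
  by apply/subvP => _ /memv_imgP [v Hv ->]; rewrite lfunE H.
rewrite limg_dim_eq //; apply/eqP; rewrite -subv0.
have /eqP -> : lker (linfun (perm_act s)) == 0%VS.
  by apply/lker0P => u v; rewrite !lfunE => /(can_inj (perm_actK s)).
by rewrite capv0.
Qed.

Lemma PAut_mem n (C : {vspace word n}) s v :
  s \in PAut C -> v \in C -> perm_act s v \in C.
Proof. by rewrite inE => /eqP H Hv; rewrite -lfunE -H memv_img. Qed.

Lemma PAut_group_set n (C : {vspace word n}) : group_set (PAut C).
Proof.
apply/group_setP; split; first by apply: PAutP => v; rewrite perm_act1.
move=> s t Hs Ht; apply: PAutP => v Hv.
by rewrite perm_actM; do 2 apply: PAut_mem => //.
Qed.

Canonical PAut_group n (C : {vspace word n}) := Group (PAut_group_set C).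

Definition genmx n (C : {vspace word n}) : 'M['F_2]_(\dim C, n) :=
  \matrix_(r < \dim C) (vbasis C)`_r.

Lemma genmx_mem n (C : {vspace word n}) (x : 'rV_(\dim C)) : x *m genmx C \in C.
Proof.
rewrite mulmx_sum_row; apply: memv_suml => r _; apply: memvZ.
by rewrite rowK; apply: vbasis_mem; apply: mem_nth; rewrite size_tuple.
Qed.

Lemma genmx_inj n (C : {vspace word n}) (x : 'rV_(\dim C)) : x *m genmx C = 0 -> x = 0.
Proof.
rewrite mulmx_sum_row => H.
have H0 := (freeP (basis_free (vbasisP C))) (fun r => x 0 r).
apply/matrixP => a b; rewrite (ord1 a) mxE; apply: H0.
by rewrite -[RHS]H; apply: eq_bigr => r _; rewrite rowK.
Qed.

Lemma genmx_surj n (C : {vspace word n}) c : c \in C -> exists x, c = x *m genmx C.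
Proof.
move/coord_vbasis => ->; exists (\row_r coord (vbasis C) r c).
by rewrite mulmx_sum_row; apply: eq_bigr => r _; rewrite rowK mxE.
Qed.

Lemma genmx_nonzero_col n (C : {vspace word n}) :
  (0 < \dim C)%N -> exists i, col i (genmx C) != 0.
Proof.
move=> Hk; case: (pickP (fun i => col i (genmx C) != 0)) => [i Hi|H].
  by exists i.
have G0 : genmx C = 0.
  apply/matrixP => a b; have := H b; move/negbFE/eqP/matrixP/(_ a 0).
  by rewrite !mxE.
have := @genmx_inj n C (delta_mx 0 (Ordinal Hk)); rewrite G0 mulmx0 => /(_ erefl).
by move/matrixP/(_ 0 (Ordinal Hk)); rewrite !mxE !eqxx /= => /eqP; rewrite oner_eq0.
Qed.

Lemma prime_dvd_PAut n (C : {vspace word n}) (A : 'M['F_2]_(\dim C)) p (v : 'cV_(\dim C)) :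
  prime p -> equidistributed (genmx C) -> iter p (mulmx A) 1%:M = 1%:M ->
  v != 0 -> A *m v != v -> (p %| #|PAut C|)%N.
Proof.
move=> Hp Gequi Ap Hv HAv; set G := genmx C.
have HA : A \in unitmx.
  by case: p Hp Ap => // p _ /= /mulmx1_unit [].
have HAV : invmx A \in unitmx by rewrite unitmx_inv.
have mapK : cancel (col_map G A) (col_map G (invmx A)).
  by move=> i; rewrite col_mapM // mulVmx // col_map1.
pose s := perm (can_inj mapK).
have sVE i : (s^-1)%g i = col_map G (invmx A) i.
  apply: (@perm_inj _ s); rewrite permKV permE col_mapM //.
  by rewrite mulmxV // col_map1.
have sP : s \in PAut C.
  apply: PAutP => _ /genmx_surj [x ->].
  rewrite (_ : perm_act s _ = (x *m invmx A) *m G); first exact: genmx_mem.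
  apply/matrixP => a b; rewrite (ord1 a) [LHS]mxE sVE !dot_col.
  by have [-> _] := col_mapP Gequi b HAV; rewrite /dot mulmxA.
have sp : (s ^+ p = 1)%g.
  apply/permP => i; rewrite permX perm1.
  rewrite (eq_iter (f' := col_map G A)) => [|j]; last by rewrite permE.
  by rewrite col_map_iter // Ap col_map1.
have s1 : (s != 1)%g.
  have [j _] := exists_nonzero_entry Hv.
  have Hk : (0 < \dim C)%N := leq_ltn_trans (leq0n j) (ltn_ord j).
  have [i Hi] := col_map_moves Gequi HA (genmx_nonzero_col Hk) Hv HAv.
  apply: contra Hi => /eqP s1.
  by have := permE (can_inj mapK) i; rewrite -/s s1 perm1 => <-.
have <- : #[s]%g = p.
  apply/(prime_nt_dvdP Hp); first by rewrite order_eq1.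
  by rewrite order_dvdn sp.
exact: order_dvdG sP.
Qed.

(* Step 4: elements of order 2 and 3 of GL_k(F_2), k >= 2, moving a nonzero
   vector.  They are 2 x 2 matrices with zero top-left entry, extended by the
   identity on the remaining coordinates. *)

Definition block_ext k (M : 'M['F_2]_2) : 'M_(2 + k) := block_mx M 0 0 1%:M.

Lemma block_extM k (M N : 'M['F_2]_2) :
  block_ext k (M *m N) = block_ext k M *m block_ext k N.
Proof. by rewrite /block_ext mulmx_block !mulmx0 !mul0mx !addr0 !add0r mul1mx. Qed.

Lemma block_ext_iter k (M : 'M['F_2]_2) p :
  iter p (mulmx (block_ext k M)) 1%:M = block_ext k (iter p (mulmx M) 1%:M).
Proof.
elim: p => [|p IHp] /=; first by rewrite /block_ext -scalar_mx_block.
by rewrite IHp block_extM.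
Qed.

Lemma block_ext_moves k (M : 'M['F_2]_2) : M 0 0 = 0 ->
  exists v : 'cV_(2 + k), v != 0 /\ block_ext k M *m v != v.
Proof.
move=> M00; exists (col_mx (delta_mx 0 0) 0); split.
  rewrite col_mx_eq0 eqxx andbT; apply/negP => /eqP/matrixP/(_ 0 0).
  by rewrite !mxE.
rewrite /block_ext mul_block_col !mulmx0 !addr0.
apply/negP => /eqP/eq_col_mx [/matrixP/(_ 0 0) + _].
rewrite !mxE !big_ord_recl big_ord0 !mxE M00 /= mul0r mulr0 !addr0.
by move=> /eqP; rewrite eq_sym oner_eq0.
Qed.

Lemma lift_order_mx (M : 'M['F_2]_2) p k : (2 <= k)%N ->
  iter p (mulmx M) 1%:M = 1%:M -> M 0 0 = 0 ->
  exists A : 'M['F_2]_k, iter p (mulmx A) 1%:M = 1%:M /\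
                        exists v : 'cV_k, v != 0 /\ A *m v != v.
Proof.
case: k => [|[|k]] // _ Mp M00; exists (block_ext k M).
split; last exact: block_ext_moves.
by rewrite block_ext_iter Mp /block_ext -scalar_mx_block.
Qed.

Definition swap2 : 'M['F_2]_2 := \matrix_(i, j) (i != j)%:R.

Lemma swap2_order : iter 2 (mulmx swap2) 1%:M = 1%:M.
Proof.
apply/matrixP => i j; rewrite /= mulmx1 !mxE !big_ord_recl !big_ord0 !mxE.
by case: i => [[|[|//]]] ?; case: j => [[|[|//]]] ?; apply/val_inj.
Qed.

(* The companion matrix of X^2 + X + 1, of order 3. *)
Definition rot3 : 'M['F_2]_2 := \matrix_(i, j) ((i != 0) || (j != 0))%:R.

Lemma rot3_order : iter 3 (mulmx rot3) 1%:M = 1%:M.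
Proof.
apply/matrixP => i j; rewrite /= mulmx1 !mxE !big_ord_recl !big_ord0 !mxE.
rewrite !big_ord_recl !big_ord0 !mxE.
by case: i => [[|[|//]]] ?; case: j => [[|[|//]]] ?; apply/val_inj.
Qed.

Theorem corollary5p3 (n : nat) (C : {vspace word n}) (w : nat) :
  constant_weight C w -> (2 <= \dim C)%N -> (6 %| #|PAut C|)%N.
Proof.
move=> Hcw Hdim.
have Gequi : equidistributed (genmx C).
  apply: (@equidistributed_of_constant_weight _ _ _ w) => x Hx.
  apply: Hcw; first exact: genmx_mem.
  by apply: contraNneq Hx => /genmx_inj ->.
have [A2 [A2_order [v2 [Hv2 A2v2]]]] := lift_order_mx Hdim swap2_order (mxE _ _ _ _).
have [A3 [A3_order [v3 [Hv3 A3v3]]]] := lift_order_mx Hdim rot3_order (mxE _ _ _ _).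
rewrite (@Gauss_dvd 2 3) //; apply/andP; split.
  exact: prime_dvd_PAut Gequi A2_order Hv2 A2v2.
exact: prime_dvd_PAut Gequi A3_order Hv3 A3v3.
Qed.
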